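(* Let $(V,\|\cdot\|)$ be a normed plane with unit circle $S$ and let $x,y\in V$ be nonzero with $x\dashv_B y$. Then $\|T_{xy}(z)\|\le 3$ for every $z\in S$. Moreover, if $\|T_{xy}(z)\|=3$ for some $z\in S$, then the plane is rectilinear (its unit circle is a parallelogram).
   Context: A normed (Minkowski) plane $(V,\|\cdot\|)$ is a two-dimensional real vector space with a norm; $S=\{v:\|v\|=1\}$ is its unit circle. For nonzero $x,y$, $x$ is Birkhoff orthogonal to $y$, written $x\dashv_B y$, if $\|x+ty\|\ge\|x\|$ for all $t\in\mathbb{R}$ (this forces $x,y$ to be linearly independent). For linearly independent $x,y\in V$, $T_{xy}:V\to V$ is the linear map with $T_{xy}(x)=x$ and $T_{xy}(y)=-y$. A normed plane is rectilinear if its unit circle is a parallelogram. *)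

From Stdlib Require Import Reals Lra.
Open Scope R_scope.

(* A two-dimensional real vector space is modelled as R^2 = R * R;
   every 2-dimensional real normed space is linearly isometric to
   (R^2, N) for some norm N, so this is no loss of generality. *)
Definition V : Type := (R * R)%type.

Definition vzero : V := (0, 0).
Definition vadd (u v : V) : V := (fst u + fst v, snd u + snd v).
Definition vscale (a : R) (u : V) : V := (a * fst u, a * snd u).
Definition vopp (u : V) : V := vscale (-1) u.

Definition is_norm (N : V -> R) : Prop :=
  (forall v, 0 <= N v) /\
  (forall v, N v = 0 -> v = vzero) /\
  (forall a v, N (vscale a v) = Rabs a * N v) /\
  (forall u v, N (vadd u v) <= N u + N v).

Definition unit_circle (N : V -> R) (v : V) : Prop := N v = 1.

Definition birkhoff (N : V -> R) (x y : V) : Prop :=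
  forall t : R, N x <= N (vadd x (vscale t y)).

Definition is_linear (T : V -> V) : Prop :=
  (forall u v, T (vadd u v) = vadd (T u) (T v)) /\
  (forall a u, T (vscale a u) = vscale a (T u)).

Definition lin_indep (u v : V) : Prop :=
  forall a b : R, vadd (vscale a u) (vscale b v) = vzero -> a = 0 /\ b = 0.

Definition parallelogram_boundary (p b c : V) (v : V) : Prop :=
  exists s t : R, 0 <= s <= 1 /\ 0 <= t <= 1 /\
    (s = 0 \/ s = 1 \/ t = 0 \/ t = 1) /\
    v = vadd p (vadd (vscale s b) (vscale t c)).

Definition rectilinear (N : V -> R) : Prop :=
  exists p b c : V, lin_indep b c /\
    forall v, unit_circle N v <-> parallelogram_boundary p b c v.

From Stdlib Require Import Reals Lra.
Open Scope R_scope.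

(* Write z = a x + b y.  Birkhoff orthogonality gives |a| N x <= N z, and
   T z = 2 a x - z, so N (T z) <= 2 |a| N x + N z <= 3.  If N (T z) = 3, then
   u := a x and w := z are unit vectors with N (2 u - w) = 3 = 2 N u + N w and
   u Birkhoff orthogonal to w - u.  These two extremal facts force
   N (s u + t w) = |s| + |t| for all s, t: the norm is the l1-norm in the basis
   (u, w), whose unit circle is the parallelogram with vertices +-u, +-w. *)

Ltac vec_ring :=
  apply injective_projections; unfold vadd, vscale, vopp, vzero; simpl; ring.

Definition det (u v : V) : R := fst u * snd v - snd u * fst v.

Lemma det_lin_indep (u v : V) : det u v <> 0 -> lin_indep u v.
Proof.
  destruct u as [u1 u2], v as [v1 v2]; unfold det, lin_indep, vadd, vscale, vzero;
    simpl; intros Hd a b E.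
  injection E as E1 E2.
  assert (Ea : a * (u1 * v2 - u2 * v1) = 0).
  { replace (a * (u1 * v2 - u2 * v1)) with
      (v2 * (a * u1 + b * v1) - v1 * (a * u2 + b * v2)) by ring.
    rewrite E1, E2; ring. }
  assert (Eb : b * (u1 * v2 - u2 * v1) = 0).
  { replace (b * (u1 * v2 - u2 * v1)) with
      (u1 * (a * u2 + b * v2) - u2 * (a * u1 + b * v1)) by ring.
    rewrite E1, E2; ring. }
  split.
  - destruct (Rmult_integral _ _ Ea); [assumption | contradiction].
  - destruct (Rmult_integral _ _ Eb); [assumption | contradiction].
Qed.

Lemma vdecomp (u w v : V) :
  det u w <> 0 -> exists s t, v = vadd (vscale s u) (vscale t w).
Proof.
  destruct u as [u1 u2], w as [w1 w2], v as [v1 v2]; unfold det; simpl; intros Hd.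
  exists ((v1 * w2 - v2 * w1) / (u1 * w2 - u2 * w1)),
         ((u1 * v2 - u2 * v1) / (u1 * w2 - u2 * w1)).
  unfold vadd, vscale; simpl; f_equal; field; exact Hd.
Qed.

Lemma det_eq0_collinear (u v : V) :
  det u v = 0 -> v <> vzero -> exists t, u = vscale t v.
Proof.
  destruct u as [u1 u2], v as [v1 v2]; unfold det, vscale, vzero; simpl; intros Hd Hv.
  destruct (Req_dec v1 0) as [Hv1 | Hv1].
  - assert (Hv2 : v2 <> 0) by (intro Hv2; apply Hv; subst; reflexivity).
    subst v1. exists (u2 / v2).
    assert (Hu1 : u1 = 0).
    { apply (Rmult_eq_reg_r v2); [lra | assumption]. }
    subst u1. f_equal; field; exact Hv2.
  - exists (u1 / v1). f_equal; [field; exact Hv1 |].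
    apply (Rmult_eq_reg_r v1); [| exact Hv1]. field_simplify; [lra | exact Hv1].
Qed.

Lemma unit_square_boundary_Rabs (p q : R) :
  Rabs (p - q) + Rabs (p + q - 1) = 1 <->
  0 <= p <= 1 /\ 0 <= q <= 1 /\ (p = 0 \/ p = 1 \/ q = 0 \/ q = 1).
Proof.
  unfold Rabs; destruct (Rcase_abs (p - q)), (Rcase_abs (p + q - 1)); split;
    first
      [ intros (Hp & Hq & [-> | [-> | [-> | ->]]]); lra
      | intro H; repeat split; try lra;
        first [ left; lra | right; left; lra | right; right; left; lra
              | right; right; right; lra ] ].
Qed.

Section Norm.

Variable N : V -> R.
Hypothesis HN : is_norm N.

Lemma normZ (a : R) (v : V) : N (vscale a v) = Rabs a * N v.
Proof. apply HN. Qed.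

Lemma norm_triangle (u v : V) : N (vadd u v) <= N u + N v.
Proof. apply HN. Qed.

Lemma norm_gt0 (v : V) : v <> vzero -> 0 < N v.
Proof.
  intro Hv. destruct HN as [Hge0 [Heq0 _]].
  destruct (Rle_lt_or_eq_dec _ _ (Hge0 v)) as [Hlt | Heq]; [exact Hlt |].
  exfalso; apply Hv, Heq0; symmetry; exact Heq.
Qed.

Lemma normN (v : V) : N (vscale (-1) v) = N v.
Proof. rewrite normZ, Rabs_left by lra. lra. Qed.

Lemma norm_vzero : N vzero = 0.
Proof.
  replace vzero with (vscale 0 vzero) by vec_ring.
  rewrite normZ, Rabs_R0; ring.
Qed.

Lemma birkhoff_scaled_le (x y : V) (a b : R) :
  birkhoff N x y -> Rabs a * N x <= N (vadd (vscale a x) (vscale b y)).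
Proof.
  intro hB. destruct (Req_dec a 0) as [-> | Ha].
  - rewrite Rabs_R0, Rmult_0_l. apply HN.
  - replace (vadd (vscale a x) (vscale b y)) with (vscale a (vadd x (vscale (b / a) y)))
      by (apply injective_projections; unfold vadd, vscale; simpl; field; exact Ha).
    rewrite normZ. apply Rmult_le_compat_l; [apply Rabs_pos | apply hB].
Qed.

Lemma birkhoff_scale (x y : V) (a b : R) :
  birkhoff N x y -> birkhoff N (vscale a x) (vscale b y).
Proof.
  intros hB t. rewrite normZ.
  replace (vadd (vscale a x) (vscale t (vscale b y)))
    with (vadd (vscale a x) (vscale (t * b) y)) by vec_ring.
  apply birkhoff_scaled_le, hB.
Qed.

Lemma birkhoff_det (x y : V) :
  x <> vzero -> y <> vzero -> birkhoff N x y -> det x y <> 0.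
Proof.
  intros hx hy hB Hd.
  destruct (det_eq0_collinear x y Hd hy) as [t Ht].
  specialize (hB (- t)).
  replace (vadd x (vscale (- t) y)) with vzero in hB by (subst x; vec_ring).
  rewrite norm_vzero in hB. pose proof (norm_gt0 x hx). lra.
Qed.

Lemma norm_reflect_le (x y : V) (a b : R) :
  N (vadd (vscale a x) (vscale (- b) y)) <=
  2 * (Rabs a * N x) + N (vadd (vscale a x) (vscale b y)).
Proof.
  replace (vadd (vscale a x) (vscale (- b) y))
    with (vadd (vscale (2 * a) x) (vscale (-1) (vadd (vscale a x) (vscale b y))))
    by vec_ring.
  eapply Rle_trans; [apply norm_triangle |].
  rewrite normN, normZ, Rabs_mult, (Rabs_pos_eq 2) by lra. lra.
Qed.

Section Extremal.

Variables u w : V.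
Hypothesis Nu : N u = 1.
Hypothesis Nw : N w = 1.
Hypothesis N2u_w : N (vadd (vscale 2 u) (vscale (-1) w)) = 3.
Hypothesis Bu : birkhoff N u (vadd w (vscale (-1) u)).

(* Write q (2u - w) (resp. p (2u - w)) as a combination of p u - q w and a
   single unit vector, and compare norms with N (2u - w) = 3. *)
Lemma extremal_opposite_ge (p q : R) :
  0 <= p -> 0 <= q -> p + q <= N (vadd (vscale p u) (vscale (- q) w)).
Proof.
  intros Hp Hq.
  destruct (Rle_dec p (2 * q)) as [Hpq | Hpq].
  - assert (E : vscale q (vadd (vscale 2 u) (vscale (-1) w))
                = vadd (vadd (vscale p u) (vscale (- q) w)) (vscale (2 * q - p) u))
      by vec_ring.
    pose proof (norm_triangle (vadd (vscale p u) (vscale (- q) w)) (vscale (2 * q - p) u))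
      as Htri.
    rewrite <- E, !normZ, N2u_w, Nu, (Rabs_pos_eq q), (Rabs_pos_eq (2 * q - p)) in Htri
      by lra.
    lra.
  - assert (E : vscale p (vadd (vscale 2 u) (vscale (-1) w))
                = vadd (vscale 2 (vadd (vscale p u) (vscale (- q) w))) (vscale (2 * q - p) w))
      by vec_ring.
    pose proof (norm_triangle (vscale 2 (vadd (vscale p u) (vscale (- q) w)))
                  (vscale (2 * q - p) w)) as Htri.
    rewrite <- E, !normZ, N2u_w, Nw, (Rabs_pos_eq p), (Rabs_pos_eq 2),
      (Rabs_left (2 * q - p)) in Htri by lra.
    lra.
Qed.

Lemma extremal_norm_l1 (s t : R) :
  N (vadd (vscale s u) (vscale t w)) = Rabs s + Rabs t.
Proof.
  apply Rle_antisym.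
  { eapply Rle_trans; [apply norm_triangle |]. rewrite !normZ, Nu, Nw. lra. }
  destruct (Rle_dec 0 s) as [Hs | Hs], (Rle_dec 0 t) as [Ht | Ht].
  - pose proof (birkhoff_scaled_le _ _ (s + t) t Bu) as H.
    replace (vadd (vscale (s + t) u) (vscale t (vadd w (vscale (-1) u))))
      with (vadd (vscale s u) (vscale t w)) in H by vec_ring.
    rewrite Nu, (Rabs_pos_eq s), (Rabs_pos_eq t), (Rabs_pos_eq (s + t)) in * by lra. lra.
  - pose proof (extremal_opposite_ge s (- t) Hs ltac:(lra)) as H.
    rewrite Ropp_involutive in H.
    rewrite (Rabs_pos_eq s), (Rabs_left t) by lra. lra.
  - pose proof (extremal_opposite_ge (- s) t ltac:(lra) Ht) as H.
    replace (vadd (vscale (- s) u) (vscale (- t) w))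
      with (vscale (-1) (vadd (vscale s u) (vscale t w))) in H.
    + rewrite normN in H. rewrite (Rabs_left s), (Rabs_pos_eq t) by lra. lra.
    + vec_ring.
  - pose proof (birkhoff_scaled_le _ _ (s + t) t Bu) as H.
    replace (vadd (vscale (s + t) u) (vscale t (vadd w (vscale (-1) u))))
      with (vadd (vscale s u) (vscale t w)) in H by vec_ring.
    rewrite Nu, (Rabs_left s), (Rabs_left t), (Rabs_left (s + t)) in * by lra. lra.
Qed.

End Extremal.

End Norm.

Lemma rectilinear_of_l1 (N : V -> R) (u w : V) :
  det u w <> 0 ->
  (forall s t, N (vadd (vscale s u) (vscale t w)) = Rabs s + Rabs t) ->
  rectilinear N.
Proof.
  intros Hdet Hl1.
  (* Vertex -w, edges u + w and w - u: the vertices are -w, u, w, -u. *)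
  exists (vscale (-1) w), (vadd u w), (vadd w (vscale (-1) u)). split.
  { apply det_lin_indep. unfold det, vadd, vscale; simpl.
    intro H. apply Hdet. unfold det. lra. }
  assert (Hpar : forall p q,
    vadd (vscale (-1) w) (vadd (vscale p (vadd u w)) (vscale q (vadd w (vscale (-1) u))))
    = vadd (vscale (p - q) u) (vscale (p + q - 1) w)) by (intros; vec_ring).
  intro v. unfold unit_circle, parallelogram_boundary. split.
  - intro Hv. destruct (vdecomp u w v Hdet) as [s [t ->]].
    rewrite Hl1 in Hv.
    set (p := (s + t + 1) / 2); set (q := (t - s + 1) / 2).
    assert (Hs : p - q = s) by (unfold p, q; field).
    assert (Ht : p + q - 1 = t) by (unfold p, q; field).
    destruct (proj1 (unit_square_boundary_Rabs p q)) as (Hp & Hq & Hpq);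
      [rewrite Hs, Ht; exact Hv |].
    exists p, q. rewrite Hpar, Hs, Ht.
    exact (conj Hp (conj Hq (conj Hpq eq_refl))).
  - intros (p & q & Hp & Hq & Hpq & ->).
    rewrite Hpar, Hl1. apply unit_square_boundary_Rabs; auto.
Qed.

Theorem lemma5p1 (N : V -> R) (HN : is_norm N) (x y : V)
  (hx : x <> vzero) (hy : y <> vzero) (hB : birkhoff N x y)
  (T : V -> V) (hT : is_linear T) (hTx : T x = x) (hTy : T y = vopp y) :
  (forall z, unit_circle N z -> N (T z) <= 3) /\
  ((exists z, unit_circle N z /\ N (T z) = 3) -> rectilinear N).
Proof.
  assert (Hdet : det x y <> 0) by exact (birkhoff_det N HN x y hx hy hB).
  assert (HTxy : forall a b,
    T (vadd (vscale a x) (vscale b y)) = vadd (vscale a x) (vscale (- b) y)).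
  { intros a b. destruct hT as [Hadd Hscale].
    rewrite Hadd, !Hscale, hTx, hTy. unfold vopp. vec_ring. }
  assert (Hunit : forall a b,
    N (vadd (vscale a x) (vscale b y)) = 1 ->
    Rabs a * N x <= 1 /\ N (T (vadd (vscale a x) (vscale b y))) <= 2 * (Rabs a * N x) + 1).
  { intros a b Hz. rewrite HTxy, <- Hz.
    split; [apply (birkhoff_scaled_le N HN), hB | apply (norm_reflect_le N HN)]. }
  split.
  - intros z Hz. destruct (vdecomp x y z Hdet) as [a [b ->]].
    destruct (Hunit a b Hz). lra.
  - intros [z [Hz H3]]. destruct (vdecomp x y z Hdet) as [a [b ->]].
    destruct (Hunit a b Hz) as [Hax HTz].
    assert (Hax1 : Rabs a * N x = 1) by lra.
    assert (Nu : N (vscale a x) = 1) by (rewrite (normZ N HN); exact Hax1).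
    assert (Ha : a <> 0) by (intros ->; rewrite Rabs_R0 in Hax1; lra).
    rewrite HTxy in H3.
    assert (Hb : b <> 0) by (intros ->; rewrite Ropp_0 in H3; unfold unit_circle in Hz; lra).
    apply (rectilinear_of_l1 N (vscale a x) (vadd (vscale a x) (vscale b y))).
    + replace (det (vscale a x) (vadd (vscale a x) (vscale b y))) with (a * b * det x y)
        by (unfold det, vadd, vscale; simpl; ring).
      repeat apply Rmult_integral_contrapositive_currified; assumption.
    + apply (extremal_norm_l1 N HN); [exact Nu | exact Hz | |].
      * replace (vadd (vscale 2 (vscale a x)) (vscale (-1) (vadd (vscale a x) (vscale b y))))
          with (vadd (vscale a x) (vscale (- b) y)) by vec_ring.
        exact H3.
      * replace (vadd (vadd (vscale a x) (vscale b y)) (vscale (-1) (vscale a x)))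
          with (vscale b y) by vec_ring.
        apply (birkhoff_scale N HN), hB.
Qed.
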